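(* Let $\mathcal{C}$ be a Fraïssé class of finite structures over a finite relational language, and let $M$ be its Fraïssé limit. Assume that every structure in $\mathcal{C}$ is rigid (has trivial automorphism group). Then at least one of the following holds: (a) $M$ has a reduct which is a total order, i.e. there is a strict total order on the domain of $M$ that is definable in $M$ by a first-order formula without parameters; (b) there are structures $A,B\in\mathcal{C}$ with $|A|=2$ which witness that $\mathcal{C}$ is not a Ramsey class, i.e. for every $C\in\mathcal{C}$ there is a colouring of the embeddings $A\to C$ with two colours such that no embedding $g:B\to C$ is monochromatic.
   Context: All structures are non-empty, and classes are closed under isomorphism and hereditary (closed under induced substructures). A Fraïssé class is such a class satisfying the joint embedding property (any two members embed in a common member) and the amalgamation property (for $A,B_1,B_2\in\mathcal{C}$ and embeddings $f_i:A\to B_i$ there exist $C\in\mathcal{C}$ and embeddings $g_i:B_i\to C$ with $g_1\circ f_1=g_2\circ f_2$). Its Fraïssé limit is the unique countable homogeneous structure whose age (class of finite structures embeddable in it) is $\mathcal{C}$; homogeneous means every isomorphism between finite substructures extends to an automorphism. An embedding $g:B\to C$ is monochromatic for a colouring of the embeddings $A\to C$ if all embeddings $A\to C$ whose image is contained in the image of $g$ receive the same colour. $\mathcal{C}$ is a Ramsey class if for all $A,B\in\mathcal{C}$ there is $C\in\mathcal{C}$ such that every $2$-colouring of the embeddings $A\to C$ admits a monochromatic embedding $B\to C$. *)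

From mathcomp Require Import all_boot.
Set Implicit Arguments. Unset Strict Implicit. Unset Printing Implicit Defensive.

Section FirstOrder.
Variables (L : finType) (ar : L -> nat).

Record struct := Struct {
  car : Type;
  srel : forall s : L, ('I_(ar s) -> car) -> Prop }.

Definition embedding (A B : struct) (f : car A -> car B) : Prop :=
  injective f /\ forall (s : L) (t : 'I_(ar s) -> car A), srel t <-> srel (f \o t).

Definition isomorphism (A B : struct) (f : car A -> car B) : Prop :=
  embedding f /\ bijective f.

Definition automorphism (A : struct) (f : car A -> car A) : Prop :=
  isomorphism f.

Definition rigid (A : struct) : Prop :=
  forall f : car A -> car A, automorphism f -> forall x, f x = x.

Definition finite_set (T : Type) (S : T -> Prop) : Prop :=
  exists n (g : 'I_n -> T), forall x, S x -> exists i, g i = x.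

Definition finite_struct (A : struct) : Prop := finite_set (fun _ : car A => True).
Definition nonempty_struct (A : struct) : Prop := inhabited (car A).
Definition countable_struct (A : struct) : Prop :=
  exists f : car A -> nat, injective f.

Definition two_elements (A : struct) : Prop :=
  exists a b : car A, a <> b /\ forall x, x = a \/ x = b.

Definition iso_closed (C : struct -> Prop) : Prop :=
  forall A B (f : car A -> car B), C A -> isomorphism f -> C B.

Definition hereditary (C : struct -> Prop) : Prop :=
  forall A B (f : car A -> car B), C B -> nonempty_struct A -> embedding f -> C A.

Definition JEP (C : struct -> Prop) : Prop :=
  forall A B, C A -> C B -> exists D, C D /\
    (exists f : car A -> car D, embedding f) /\ (exists g : car B -> car D, embedding g).

Definition AP (C : struct -> Prop) : Prop :=
  forall A B1 B2 (f1 : car A -> car B1) (f2 : car A -> car B2),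
    C A -> C B1 -> C B2 -> embedding f1 -> embedding f2 ->
    exists D (g1 : car B1 -> car D) (g2 : car B2 -> car D),
      C D /\ embedding g1 /\ embedding g2 /\ forall a, g1 (f1 a) = g2 (f2 a).

Definition fraisse_class (C : struct -> Prop) : Prop :=
  (forall A, C A -> finite_struct A /\ nonempty_struct A) /\
  iso_closed C /\ hereditary C /\ JEP C /\ AP C.

Definition age_is (M : struct) (C : struct -> Prop) : Prop :=
  forall A, C A <-> (finite_struct A /\ nonempty_struct A /\
                     exists f : car A -> car M, embedding f).

Definition partial_iso (M : struct) (S T : car M -> Prop) (p : car M -> car M) : Prop :=
  (forall x, S x -> T (p x)) /\
  (forall x y, S x -> S y -> p x = p y -> x = y) /\
  (forall y, T y -> exists x, S x /\ p x = y) /\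
  (forall (s : L) (t : 'I_(ar s) -> car M), (forall i, S (t i)) ->
      (srel t <-> srel (p \o t))).

Definition homogeneous (M : struct) : Prop :=
  forall (S T : car M -> Prop) (p : car M -> car M),
    finite_set S -> finite_set T -> partial_iso S T p ->
    exists sigma : car M -> car M, automorphism sigma /\ forall x, S x -> sigma x = p x.

Definition fraisse_limit (C : struct -> Prop) (M : struct) : Prop :=
  countable_struct M /\ homogeneous M /\ age_is M C.

Inductive formula : Type :=
  | FRel (s : L) (v : 'I_(ar s) -> nat)
  | FEq (i j : nat)
  | FNot (phi : formula)
  | FAnd (phi psi : formula)
  | FOr (phi psi : formula)
  | FImp (phi psi : formula)
  | FEx (i : nat) (phi : formula)
  | FAll (i : nat) (phi : formula).

Definition update (T : Type) (e : nat -> T) (i : nat) (a : T) : nat -> T :=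
  fun n => if n == i then a else e n.

Fixpoint sat (M : struct) (e : nat -> car M) (phi : formula) : Prop :=
  match phi with
  | FRel s v => srel (fun k => e (v k))
  | FEq i j => e i = e j
  | FNot p => ~ sat e p
  | FAnd p q => sat e p /\ sat e q
  | FOr p q => sat e p \/ sat e q
  | FImp p q => sat e p -> sat e q
  | FEx i p => exists a, sat (update e i a) p
  | FAll i p => forall a, sat (update e i a) p
  end.

Definition env2 (T : Type) (x y : T) : nat -> T :=
  fun n => if n is 0 then x else y.

Definition strict_total_order (T : Type) (R : T -> T -> Prop) : Prop :=
  (forall x, ~ R x x) /\
  (forall x y z, R x y -> R y z -> R x z) /\
  (forall x y, x <> y -> R x y \/ R y x).

Definition has_definable_total_order (M : struct) : Prop :=
  exists phi : formula,
    strict_total_order (fun x y : car M => sat (env2 x y) phi).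

Definition not_ramsey_witness (C : struct -> Prop) (A B : struct) : Prop :=
  forall D, C D ->
    exists chi : (car A -> car D) -> bool,
      forall g : car B -> car D, embedding g ->
        exists f1 f2 : car A -> car D,
          embedding f1 /\ embedding f2 /\
          (forall a, exists b, f1 a = g b) /\ (forall a, exists b, f2 a = g b) /\
          chi f1 <> chi f2.

End FirstOrder.

From mathcomp Require Import all_boot boolp.
From Stdlib Require List.
Set Implicit Arguments. Unset Strict Implicit. Unset Printing Implicit Defensive.

(* Let h be an injection of M into nat.  By rigidity, the quantifier-free type of a
   pair of distinct points is never symmetric: otherwise swapping the two points would be
   a non-trivial automorphism of the two-element substructure.  If no two-element A in C
   witnesses a failure of the Ramsey property, colour the copies of a pair of type t by the
   order h induces on them: some D in the age contains a copy of any given B on which h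
   orients all pairs of type t alike.  Iterating over the finitely many types, h restricted
   to a copy of a finite set is the disjunction of the types of its h-increasing pairs.
   Only finitely many such quantifier-free formulas exist, so by compactness one of them
   defines a strict total order on all of M. *)

Section QuantifierFreeTypes.
Variables (L : finType) (ar : L -> nat).

(* A literal in two variables is a relation symbol together with the pattern
   saying which of its arguments is the first variable. *)
Definition literal : finType := {s : L & {ffun 'I_(ar s) -> bool}}.
Definition qftype : finType := {ffun literal -> bool}.

Definition pattern (X : Type) n (w : 'I_n -> bool) (x y : X) : 'I_n -> X :=
  fun j => if w j then x else y.

Definition qftp (A : struct ar) (x y : car A) : qftype :=
  [ffun k : literal => `[< srel (pattern (tagged k) x y) >]].

Lemma qftpP (A B : struct ar) (x y : car A) (u v : car B) :
  qftp x y = qftp u v <->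
  forall s (w : 'I_(ar s) -> bool), srel (pattern w x y) <-> srel (pattern w u v).
Proof.
split=> [E s w | H]; last by apply/ffunP => k; rewrite !ffunE; exact/asbool_equiv_eq/H.
have finfunE X (a b : X) : pattern (finfun w) a b = pattern w a b.
  by apply: funext => j; rewrite /pattern ffunE.
have := congr1 (fun f : qftype => f (Tagged _ (finfun w))) E.
by rewrite !ffunE /= !finfunE => tpE; exact: asbool_eq_equiv tpE.
Qed.

Lemma qftp_embedding (A B : struct ar) (f : car A -> car B) (x y : car A) :
  embedding f -> qftp (f x) (f y) = qftp x y.
Proof.
move=> [_ f_rel]; apply/qftpP => s w; rewrite (f_rel s (pattern w x y)).
suff ->: f \o pattern w x y = pattern w (f x) (f y) by [].
by apply: funext => j; rewrite /pattern /=; case: (w j).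
Qed.

Lemma qftp_swap (A B : struct ar) (x y : car A) (u v : car B) :
  qftp x y = qftp u v -> qftp y x = qftp v u.
Proof.
have swapE X n (w : 'I_n -> bool) (a b : X) : pattern w b a = pattern (negb \o w) a b.
  by apply: funext => j; rewrite /pattern /=; case: (w j).
by move/qftpP=> H; apply/qftpP => s w; rewrite (swapE _ _ w x y) (swapE _ _ w u v).
Qed.

Lemma embedding_id (A : struct ar) : embedding (fun x : car A => x).
Proof. by split. Qed.

Lemma embedding_comp (A B D : struct ar) (f : car A -> car B) (g : car B -> car D) :
  embedding f -> embedding g -> embedding (g \o f).
Proof.
move=> [f_inj f_rel] [g_inj g_rel]; split=> [|s t]; first exact: inj_comp.
by rewrite (f_rel s t); exact: g_rel.
Qed.

Definition pair_map (A B : struct ar) (a : car A) (c d : car B) (x : car A) : car B :=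
  if `[< x = a >] then c else d.

Lemma pair_map_embedding (A B : struct ar) (a b : car A) (c d : car B) :
  (forall x, x = a \/ x = b) -> c <> d -> qftp a b = qftp c d ->
  embedding (pair_map a c d).
Proof.
move=> cover ncd /qftpP tpE; split.
  move=> x y; rewrite /pair_map.
  case: asboolP => [->|xa]; case: asboolP => [->|ya] // cd; first by case: ncd.
  by case: (cover x) => // ->; case: (cover y) => // ->.
move=> s t; pose w j := `[< t j = a >].
have tE : t = pattern w a b.
  by apply: funext => j; rewrite /pattern /w; case: asboolP => // ta; case: (cover (t j)).
have ->: pair_map a c d \o t = pattern w c d.
  by apply: funext => j; rewrite /pattern /w /pair_map.
by rewrite {1}tE; exact: tpE.
Qed.

Lemma rigid_pair_qftp_asym (A : struct ar) (a b : car A) :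
  rigid A -> (forall x, x = a \/ x = b) -> a <> b -> qftp a b <> qftp b a.
Proof.
move=> rigA cover nab tpE; have nba : b <> a by move/esym.
have swap_emb : embedding (pair_map a b a) by exact: pair_map_embedding.
have swapK : involutive (pair_map a b a).
  move=> x; rewrite /pair_map.
  by case: (cover x) => ->; rewrite ?(asboolT (erefl a)) ?(asboolF nba) ?(asboolT (erefl a)).
have := rigA _ (conj swap_emb (inv_bij swapK)) a.
by rewrite /pair_map (asboolT (erefl a)).
Qed.

End QuantifierFreeTypes.

Section InducedSubstructures.
Variables (L : finType) (ar : L -> nat) (A : struct ar).

Definition induced (S : car A -> Prop) : struct ar :=
  @Struct L ar {x | S x} (fun s t => srel (fun j => sval (t j))).

Lemma sval_embedding (S : car A -> Prop) : embedding (fun a : car (induced S) => sval a).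
Proof. by split=> [[x hx] [y hy] /= xy|//]; exact: eq_exist. Qed.

Lemma finite_set_In (x0 : car A) (s : seq (car A)) : finite_set (fun x => List.In x s).
Proof.
exists (size s), (fun i => nth x0 s i).
elim: s => [|a s IH] x //= [<-|xs]; first by exists ord0.
by have [i <-] := IH x xs; exists (lift ord0 i).
Qed.

Lemma finite_induced (S : car A -> Prop) (x0 : car A) :
  S x0 -> finite_set S -> finite_struct (induced S).
Proof.
move=> Sx0 [n [g gS]]; exists n.
exists (fun i => if pselect (S (g i)) is left Sgi then exist S (g i) Sgi else exist S x0 Sx0).
move=> [x Sx] _; have [i gix] := gS x Sx; exists i.
by case: pselect => [Sgi|]; [exact: eq_exist | rewrite gix].
Qed.

End InducedSubstructures.

Lemma induced_In_age (L : finType) (ar : L -> nat) (M : struct ar) (C : struct ar -> Prop)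
    (s : seq (car M)) (x : car M) :
  age_is M C -> List.In x s -> C (induced (fun y => List.In y s)).
Proof.
move=> ageM xs; apply/ageM; split; first exact: finite_induced xs (finite_set_In x s).
by split; [exact: inhabits (exist _ x xs) | exists sval; exact: sval_embedding].
Qed.

Section QuantifierFreeFormulas.
Variables (L : finType) (ar : L -> nat) (A : struct ar).

Definition Ftrue : formula ar := FEq ar 0 0.

Definition Fbigand (I : Type) (s : seq I) (F : I -> formula ar) : formula ar :=
  foldr (fun i f => FAnd (F i) f) Ftrue s.

Definition Fbigor (I : Type) (s : seq I) (F : I -> formula ar) : formula ar :=
  foldr (fun i f => FOr (F i) f) (FNot Ftrue) s.

Lemma sat_Fbigand (e : nat -> car A) (I : eqType) (s : seq I) (F : I -> formula ar) :
  sat e (Fbigand s F) <-> forall i, i \in s -> sat e (F i).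
Proof.
elim: s => [|a s IH] /=; first by [].
split=> [[Fa /IH Fs] i|Fs]; first by rewrite in_cons => /predU1P[->|/Fs].
by split; [apply: Fs; rewrite mem_head | apply/IH => i si; apply: Fs; rewrite in_cons si orbT].
Qed.

Lemma sat_Fbigor (e : nat -> car A) (I : eqType) (s : seq I) (F : I -> formula ar) :
  sat e (Fbigor s F) <-> exists2 i, i \in s & sat e (F i).
Proof.
elim: s => [|a s IH] /=; first by split=> [/(_ erefl)|[]].
split=> [[Fa|/IH[i si Fi]]|[i]]; first by exists a; rewrite ?mem_head.
  by exists i; rewrite // in_cons si orbT.
by rewrite in_cons => /predU1P[->|si Fi]; [left | right; apply/IH; exists i].
Qed.

Definition Fatom (k : literal ar) : formula ar :=
  FRel (fun j => if tagged k j then 0 else 1).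

Definition Ftype (t : qftype ar) : formula ar :=
  Fbigand (enum (literal ar)) (fun k => if t k then Fatom k else FNot (Fatom k)).

Definition Ftypes (P : {set qftype ar}) : formula ar := Fbigor (enum P) Ftype.

Lemma sat_Fatom (x y : car A) (k : literal ar) :
  sat (env2 x y) (Fatom k) <-> srel (pattern (tagged k) x y).
Proof.
rewrite /=; suff ->: (fun j => env2 x y (if tagged k j then 0 else 1)) = pattern (tagged k) x y
  by [].
by apply: funext => j; rewrite /pattern; case: (tagged k j).
Qed.

Lemma sat_Ftype (x y : car A) (t : qftype ar) : sat (env2 x y) (Ftype t) <-> qftp x y = t.
Proof.
rewrite sat_Fbigand; split=> [tp|<- k _].
  apply/ffunP => k; rewrite ffunE; have := tp k (mem_enum _ k).
  by case: (t k) => [/sat_Fatom/asboolT | /= nk]; last apply/asboolF => /sat_Fatom.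
by rewrite ffunE; case: asboolP => [/sat_Fatom|nk /sat_Fatom].
Qed.

Lemma sat_Ftypes (x y : car A) (P : {set qftype ar}) :
  sat (env2 x y) (Ftypes P) <-> qftp x y \in P.
Proof.
rewrite sat_Fbigor; split=> [[t]|Pxy]; first by rewrite mem_enum => Pt /sat_Ftype ->.
by exists (qftp x y); rewrite ?mem_enum // sat_Ftype.
Qed.

End QuantifierFreeFormulas.

Section StrictTotalOrders.
Variable X : Type.

Definition strict_total_order_on (S : X -> Prop) (R : X -> X -> Prop) : Prop :=
  [/\ forall x, S x -> ~ R x x,
      forall x y z, S x -> S y -> S z -> R x y -> R y z -> R x z &
      forall x y, S x -> S y -> x <> y -> R x y \/ R y x].

Lemma strict_total_order_onS (S S' : X -> Prop) (R : X -> X -> Prop) :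
  (forall x, S x -> S' x) -> strict_total_order_on S' R -> strict_total_order_on S R.
Proof.
move=> SS' [irr trans tot]; split.
- by move=> x /SS'/irr.
- by move=> x y z /SS' Sx /SS' Sy /SS' Sz; exact: trans.
- by move=> x y /SS' Sx /SS' Sy; exact: tot.
Qed.

Lemma strict_total_order_on_sig (S : X -> Prop) (R : X -> X -> Prop) (f : {x | S x} -> nat) :
  injective f -> (forall a b, R (sval a) (sval b) <-> f a < f b) ->
  strict_total_order_on S R.
Proof.
move=> f_inj Rf; split.
- by move=> x Sx /(Rf (exist S x Sx) (exist S x Sx)); rewrite ltnn.
- move=> x y z Sx Sy Sz /(Rf (exist S x Sx) (exist S y Sy)) xy.
  move=> /(Rf (exist S y Sy) (exist S z Sz)) yz.
  exact/(Rf (exist S x Sx) (exist S z Sz))/(ltn_trans xy yz).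
- move=> x y Sx Sy nxy.
  have /= Rxy := Rf (exist S x Sx) (exist S y Sy).
  have /= Ryx := Rf (exist S y Sy) (exist S x Sx).
  by case: (ltngtP (f (exist S x Sx)) (f (exist S y Sy))) => [/Rxy|/Ryx|/f_inj[]//];
    [left|right].
Qed.

Lemma not_strict_total_order_finite (R : X -> X -> Prop) :
  ~ strict_total_order R -> exists s, ~ strict_total_order_on (fun x => List.In x s) R.
Proof.
move=> notR; apply: contrapT => /forallNP sR; apply: notR; split; [|split].
- by move=> x; have /contrapT[/(_ x) irr _ _] := sR [:: x]; apply: irr; left.
- move=> x y z; have /contrapT[_ /(_ x y z) trans _] := sR [:: x; y; z].
  by apply: trans; rewrite /=; tauto.
- move=> x y; have /contrapT[_ _ /(_ x y) tot] := sR [:: x; y].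
  by apply: tot; rewrite /=; tauto.
Qed.

Lemma strict_total_order_of_finite (I : finType) (R : I -> X -> X -> Prop) :
  (forall s, exists i, strict_total_order_on (fun x => List.In x s) (R i)) ->
  exists i, strict_total_order (R i).
Proof.
move=> fin_sto; apply: contrapT => /forallNP noR.
have [s sN] : exists s, forall i, i \in enum I ->
    ~ strict_total_order_on (fun x => List.In x s) (R i).
  elim: (enum I) => [|i l [s sN]]; first by exists [::].
  have [s' s'N] := not_strict_total_order_finite (noR i).
  exists (s' ++ s) => j; rewrite in_cons => /predU1P[->|jl] sto.
    by apply/s'N/(strict_total_order_onS _ sto) => x xs'; apply: List.in_or_app; left.
  by apply/(sN j jl)/(strict_total_order_onS _ sto) => x xs; apply: List.in_or_app; right.
by have [i] := fin_sto s; apply: sN; rewrite mem_enum.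
Qed.

End StrictTotalOrders.

Definition ramsey_for (L : finType) (ar : L -> nat) (C : struct ar -> Prop)
    (A B : struct ar) : Prop :=
  exists2 D, C D & forall chi : (car A -> car D) -> bool,
    exists2 g : car B -> car D, embedding g &
      forall f1 f2 : car A -> car D, embedding f1 -> embedding f2 ->
        (forall a, exists b, f1 a = g b) -> (forall a, exists b, f2 a = g b) ->
        chi f1 = chi f2.

Lemma ramsey_for_of_not_witness (L : finType) (ar : L -> nat) (C : struct ar -> Prop)
    (A B : struct ar) :
  ~ not_ramsey_witness C A B -> ramsey_for C A B.
Proof.
move=> /existsNP[D /not_implyP[CD /forallNP noChi]]; exists D => // chi.
have /existsNP[g /not_implyP[g_emb noF]] := noChi chi; exists g => // f1 f2 *.
apply: contrapT => neq; apply: noF; exists f1, f2; by [].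
Qed.

Section OrderFromRamseyPairs.
Variables (L : finType) (ar : L -> nat) (C : struct ar -> Prop) (M : struct ar).
Hypothesis ageM : age_is M C.
Hypothesis rigidC : forall A, C A -> rigid A.
Hypothesis ramsey_pairs :
  forall A B, C A -> C B -> two_elements A -> ramsey_for C A B.
Variable h : car M -> nat.
Hypothesis h_inj : injective h.

Definition pair (u v : car M) : struct ar := induced (fun x => List.In x [:: u; v]).

Lemma pair_in_age (u v : car M) : C (pair u v).
Proof. by apply: induced_In_age ageM _; left. Qed.

Lemma pairP (u v : car M) :
  exists a b : car (pair u v), [/\ sval a = u, sval b = v & forall x, x = a \/ x = b].
Proof.
exists (exist _ u (or_introl erefl)), (exist _ v (or_intror (or_introl erefl))).
split=> // - [x [ux|[vx|[]]]]; [left|right]; exact: eq_exist.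
Qed.

Lemma qftp_asym (u v : car M) : u <> v -> qftp u v <> qftp v u.
Proof.
move=> nuv tpE; have [a [b [au bv cover]]] := pairP u v.
have nab : a <> b by move/(congr1 sval); rewrite au bv.
apply: (rigid_pair_qftp_asym (rigidC (pair_in_age u v)) cover nab).
by rewrite -!(qftp_embedding _ _ (sval_embedding _)) au bv.
Qed.

Lemma qftp_neq (u v x y : car M) : u <> v -> qftp x y = qftp u v -> x <> y.
Proof.
by move=> nuv tpE xy; apply: (qftp_asym nuv); rewrite -tpE -(qftp_swap tpE) xy.
Qed.

Definition in_range (B : struct ar) (G : car B -> car M) (u : car M) : Prop :=
  exists b, G b = u.

Definition coherent (t : qftype ar) (U : car M -> Prop) : Prop :=
  forall u v u' v', U u -> U v -> U u' -> U v' -> u <> v -> u' <> v' ->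
    qftp u v = t -> qftp u' v' = t -> h u < h v -> h u' < h v'.

Lemma coherentS (t : qftype ar) (U V : car M -> Prop) :
  (forall x, U x -> V x) -> coherent t V -> coherent t U.
Proof. by move=> UV cohV u v u' v' /UV Uu /UV Uv /UV Uu' /UV Uv'; apply: cohV. Qed.

(* The Ramsey property for a pair [{u, v}] of type [t], applied to the colouring of its
   copies by the order [h] induces on them, makes [t] coherent on a copy of [B]. *)
Lemma coherent_copy (t : qftype ar) (B : struct ar) : C B ->
  exists2 D, C D & forall e : car D -> car M, embedding e ->
    exists2 g : car B -> car D, embedding g & coherent t (in_range (e \o g)).
Proof.
move=> CB; case: (pselect (exists u v : car M, u <> v /\ qftp u v = t)); last first.
  move=> no_t; exists B => // e _; exists id; first exact: embedding_id.
  by move=> u v *; case: no_t; exists u, v.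
move=> [u [v [nuv tuv]]]; have [a [b [au bv cover]]] := pairP u v.
have nab : a <> b by move/(congr1 sval); rewrite au bv.
have nba : b <> a by move/esym.
have two_uv : two_elements (pair u v) by exists a, b.
have [D CD mono] := ramsey_pairs (pair_in_age u v) CB two_uv.
exists D => // e e_emb.
pose chi (f : car (pair u v) -> car D) := h (e (f a)) < h (e (f b)).
have [g g_emb g_mono] := mono chi; exists g => //.
have copy_emb c d : c <> d -> qftp (e c) (e d) = t -> embedding (pair_map a c d).
  move=> ncd tcd; apply: pair_map_embedding => //.
  rewrite -(qftp_embedding _ _ (sval_embedding _)) au bv tuv -tcd.
  exact: qftp_embedding.
have copy_range b1 b2 x : exists b', pair_map a (g b1) (g b2) x = g b'.
  by rewrite /pair_map; case: ifP; [exists b1 | exists b2].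
have chiE c d : chi (pair_map a c d) = (h (e c) < h (e d)).
  by rewrite /chi /pair_map (asboolT (erefl a)) (asboolF nba).
have neq c d : e c <> e d -> c <> d by move=> ecd cd; apply: ecd; rewrite cd.
move=> _ _ _ _ [b1 <-] [b2 <-] [b1' <-] [b2' <-] /neq n12 /neq n12' t12 t12' lt12.
by rewrite -chiE -(g_mono (pair_map a (g b1) (g b2))) ?chiE //; exact: copy_emb.
Qed.

Lemma coherent_copy_all (ts : seq (qftype ar)) (B : struct ar) : C B ->
  exists2 D, C D & forall e : car D -> car M, embedding e ->
    exists2 g : car B -> car D, embedding g &
      forall t, t \in ts -> coherent t (in_range (e \o g)).
Proof.
elim: ts B => [|t ts IH] B CB.
  by exists B => // e _; exists id; first exact: embedding_id.
have [D1 CD1 copy1] := IH B CB; have [D CD copy] := coherent_copy t CD1.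
exists D => // e e_emb; have [g1 g1_emb cohg1] := copy e e_emb.
have [g g_emb cohg] := copy1 (e \o g1) (embedding_comp g1_emb e_emb).
exists (g1 \o g); first exact: embedding_comp.
move=> t'; rewrite in_cons => /predU1P[->|t'ts].
  by apply: coherentS cohg1 => _ [b <-]; exists (g b).
by apply: coherentS (cohg t' t'ts) => _ [b <-]; exists b.
Qed.

(* On a coherent copy of the finite set, [h] is defined by the disjunction of the types
   of its [h]-increasing pairs. *)
Lemma qf_order_on_finite (s : seq (car M)) : exists P : {set qftype ar},
  strict_total_order_on (fun x => List.In x s) (fun x y => sat (env2 x y) (Ftypes P)).
Proof.
case: s => [|x0 s]; first by exists set0; split.
have CS : C (induced (fun y => List.In y (x0 :: s))) by apply: induced_In_age ageM _; left.
have [D CD copy] := coherent_copy_all (enum (qftype ar)) CS.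
have [_ [_ [e e_emb]]] := proj1 (ageM D) CD.
have [g g_emb coh] := copy e e_emb.
pose G := e \o g; have G_emb : embedding G := embedding_comp g_emb e_emb.
pose P := [set t | `[< exists u v,
  [/\ in_range G u, in_range G v, u <> v, qftp u v = t & h u < h v] >]].
exists P; apply: (strict_total_order_on_sig (f := h \o G)).
  exact: inj_comp h_inj (proj1 G_emb).
move=> a b; rewrite sat_Ftypes inE.
rewrite (qftp_embedding _ _ (sval_embedding _)) -(qftp_embedding _ _ G_emb); split.
  move/asboolP=> [u [v [Gu Gv nuv tuv huv]]].
  apply: (coh _ (mem_enum _ _) u v) => //; [by exists a | by exists b |].
  exact: qftp_neq nuv (esym tuv).
move=> hab; apply/asboolP; exists (G a), (G b); split=> //; [by exists a | by exists b |].
by move=> Gab; rewrite /= Gab ltnn in hab.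
Qed.

Lemma qf_definable_total_order : has_definable_total_order M.
Proof.
have [P sto] := strict_total_order_of_finite
  (R := fun (P : {set qftype ar}) x y => sat (env2 x y) (Ftypes P)) qf_order_on_finite.
by exists (Ftypes P).
Qed.

End OrderFromRamseyPairs.

Theorem theorem1p5 (L : finType) (ar : L -> nat)
    (C : struct ar -> Prop) (M : struct ar) :
  fraisse_class C -> fraisse_limit C M ->
  (forall A, C A -> rigid A) ->
  has_definable_total_order M \/
  exists A B : struct ar, C A /\ C B /\ two_elements A /\ not_ramsey_witness C A B.
Proof.
move=> _ [[h h_inj] [_ ageM]] rigidC.
case: (pselect (exists A B : struct ar,
  C A /\ C B /\ two_elements A /\ not_ramsey_witness C A B)) => [|no_witness];
  first by right.
left; apply: (qf_definable_total_order ageM rigidC _ h_inj) => A B CA CB twoA.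
by apply: ramsey_for_of_not_witness => witness; apply: no_witness; exists A, B.
Qed.
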